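(* Let $\mathbf{C}$ be a category with a stable system of monics $\mathcal{M}$ that has pullbacks along $\mathcal{M}$-morphisms and has final pullback complements (FPCs) along $\mathcal{M}$-morphisms. Then the target functor $T:\mathsf{FPC}_v(\mathbf{C},\mathcal{M})\to\mathbf{C}|_{\mathcal{M}}$ is a Grothendieck opfibration.
   Context: A stable system of monics $\mathcal{M}$ in $\mathbf{C}$ is a class of monomorphisms containing all isomorphisms, closed under composition, and stable under pullback; $\rightarrowtail$ denotes morphisms in $\mathcal{M}$. ''Has pullbacks along $\mathcal{M}$-morphisms'': pullbacks of cospans $A\to B\leftarrowtail B'$ exist. Final pullback complement (FPC): for composable $A\xrightarrow{f}B\xrightarrow{m}C$, a pair $A\xrightarrow{n}F\xrightarrow{g}C$ with $g\circ n=m\circ f$ such that this square is a pullback, and such that for every pullback square $m\circ u=w\circ v$ (with $u:X\to B$, $v:X\to Y$, $w:Y\to C$) and every $t:X\to A$ with $f\circ t=u$, there is a unique $y:Y\to F$ with $g\circ y=w$ and $y\circ v=n\circ t$. ''Has FPCs along $\mathcal{M}$-morphisms'': FPCs exist whenever $m\in\mathcal{M}$. $\mathbf{C}|_{\mathcal{M}}$ is the category with the objects of $\mathbf{C}$ and the $\mathcal{M}$-morphisms as morphisms. The category $\mathsf{FPC}_v(\mathbf{C},\mathcal{M})$: objects are morphisms $f:A\to B$ of $\mathbf{C}$; a morphism from $f:A\to B$ to $f':A'\to B'$ is a pair $(\alpha,\beta)$ of $\mathcal{M}$-morphisms $\alpha:A\rightarrowtail A'$, $\beta:B\rightarrowtail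 B'$ with $\beta\circ f=f'\circ\alpha$ such that $(\alpha,f')$ is an FPC of $(f,\beta)$; composition is componentwise (vertical pasting). The target functor $T$ sends $f:A\to B$ to $B$ and $(\alpha,\beta)$ to $\beta$. For a functor $P:\mathbf{E}\to\mathbf{B}$, a morphism $\varphi:e\to e'$ is op-Cartesian if for every $\psi:e\to e''$ and $g:P(e')\to P(e'')$ with $g\circ P(\varphi)=P(\psi)$ there is a unique $\chi:e'\to e''$ with $\chi\circ\varphi=\psi$ and $P(\chi)=g$; $P$ is a Grothendieck opfibration if for every $f:b\to b'$ and every $e$ with $P(e)=b$ there is an op-Cartesian $\varphi:e\to e'$ with $P(\varphi)=f$. *)

Set Implicit Arguments.
Unset Strict Implicit.

Record Category := {
  Ob :> Type;
  Hom : Ob -> Ob -> Type;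
  comp : forall x y z : Ob, Hom y z -> Hom x y -> Hom x z;
  idm : forall a : Ob, Hom a a;
  comp_assoc : forall a b c d (h : Hom c d) (g : Hom b c) (f : Hom a b),
      comp h (comp g f) = comp (comp h g) f;
  comp_id_l : forall a b (f : Hom a b), comp (idm b) f = f;
  comp_id_r : forall a b (f : Hom a b), comp f (idm a) = f
}.

Arguments Hom {c} _ _ : rename.
Arguments comp {c x y z} _ _ : rename.
Arguments idm {c} _ : rename.

Notation "g \o f" := (comp g f) (at level 40, left associativity).

Section Defs.
Variable C : Category.

Definition is_mono {A B : C} (m : Hom A B) : Prop :=
  forall (X : C) (g h : Hom X A), m \o g = m \o h -> g = h.

Definition is_iso {A B : C} (f : Hom A B) : Prop :=
  exists g : Hom B A, g \o f = idm A /\ f \o g = idm B.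

Definition is_pullback {P X Y Z : C} (p1 : Hom P X) (p2 : Hom P Y)
    (f : Hom X Z) (g : Hom Y Z) : Prop :=
  f \o p1 = g \o p2 /\
  forall (Q : C) (q1 : Hom Q X) (q2 : Hom Q Y), f \o q1 = g \o q2 ->
    exists! u : Hom Q P, p1 \o u = q1 /\ p2 \o u = q2.

Definition morph_class := forall A B : C, Hom A B -> Prop.

Definition stable_system_of_monics (M : morph_class) : Prop :=
  (forall A B (m : Hom A B), M A B m -> is_mono m) /\
  (forall A B (f : Hom A B), is_iso f -> M A B f) /\
  (forall A B D (f : Hom A B) (g : Hom B D), M A B f -> M B D g -> M A D (g \o f)) /\
  (forall P X Y Z (p1 : Hom P X) (p2 : Hom P Y) (f : Hom X Z) (m : Hom Y Z),
      M Y Z m -> is_pullback p1 p2 f m -> M P X p1).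

Definition has_pullbacks_along (M : morph_class) : Prop :=
  forall (A B B' : C) (f : Hom A B) (m : Hom B' B), M B' B m ->
    exists (P : C) (p1 : Hom P A) (p2 : Hom P B'), is_pullback p1 p2 f m.

Definition is_FPC {A B D F : C} (f : Hom A B) (m : Hom B D)
    (n : Hom A F) (g : Hom F D) : Prop :=
  g \o n = m \o f /\
  is_pullback f n m g /\
  forall (X Y : C) (u : Hom X B) (v : Hom X Y) (w : Hom Y D),
    is_pullback u v m w ->
    forall t : Hom X A, f \o t = u ->
      exists! y : Hom Y F, g \o y = w /\ y \o v = n \o t.

Definition has_FPCs_along (M : morph_class) : Prop :=
  forall (A B D : C) (f : Hom A B) (m : Hom B D), M B D m ->
    exists (F : C) (n : Hom A F) (g : Hom F D), is_FPC f m n g.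

Definition FPCv_hom (M : morph_class) {A B A' B' : C}
    (f : Hom A B) (f' : Hom A' B') (alpha : Hom A A') (beta : Hom B B') : Prop :=
  M A A' alpha /\ M B B' beta /\ beta \o f = f' \o alpha /\
  is_FPC f beta alpha f'.

(* Op-Cartesianness of the FPC_v morphism (alpha, beta) : f --> f' w.r.t. the
   target functor T : FPC_v(C,M) -> C|_M  (T(f : A -> B) = B,
   T(alpha, beta) = beta); composition in FPC_v is componentwise. *)
Definition T_opcartesian (M : morph_class) {A B A' B' : C}
    (f : Hom A B) (f' : Hom A' B') (alpha : Hom A A') (beta : Hom B B') : Prop :=
  forall (A'' B'' : C) (f'' : Hom A'' B'')
         (psia : Hom A A'') (psib : Hom B B''),
    FPCv_hom M f f'' psia psib ->
    forall g : Hom B' B'', M B' B'' g -> g \o beta = psib ->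
      exists! chi : Hom A' A'' * Hom B' B'',
        FPCv_hom M f' f'' (fst chi) (snd chi) /\
        (fst chi \o alpha = psia /\ snd chi \o beta = psib) /\
        snd chi = g.

Definition target_is_opfibration (M : morph_class) : Prop :=
  forall (A B B' : C) (f : Hom A B) (beta : Hom B B'), M B B' beta ->
    exists (A' : C) (f' : Hom A' B') (alpha : Hom A A'),
      FPCv_hom M f f' alpha beta /\ T_opcartesian M f f' alpha beta.

End Defs.


(* The op-Cartesian lift of [beta] at [f] is the FPC [(alpha, f')] of
   [(f, beta)], which lies in FPC_v because [alpha], a pullback of [beta], is
   in M.  Given an FPC_v morphism [(psia, g \o beta)] out of [f], postcomposing
   the pullback square [(alpha, f')] with the mono [g] gives a pullback square
   over [g \o beta]; the universal property of the FPC [(psia, f'')] then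
   yields the unique comparison map [chi].  What remains is a cancellation
   property of FPCs: when the left square and the pasted square are FPCs, so
   is the right square [(chi, f'')].  It is proved by pulling test squares
   back along [beta], which turns them into test squares for the pasted FPC. *)

Section PullbacksAndFPCs.
Context {C : Category}.

Lemma is_pullback_sym {P X Y Z : C} {p1 : Hom P X} {p2 : Hom P Y}
    {f : Hom X Z} {g : Hom Y Z} :
  is_pullback p1 p2 f g -> is_pullback p2 p1 g f.
Proof.
  intros [Hc Hu]. split; [symmetry; exact Hc|].
  intros Q q1 q2 E.
  destruct (Hu Q q2 q1 (eq_sym E)) as [u [[H1 H2] Hun]].
  exists u. split; [split; assumption|].
  intros u' [H1' H2']. apply Hun; split; assumption.
Qed.

Lemma is_pullback_postcomp_mono {P X Y Z W : C} {p1 : Hom P X} {p2 : Hom P Y}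
    {f : Hom X Z} {g : Hom Y Z} {h : Hom Z W} :
  is_pullback p1 p2 f g -> is_mono h -> is_pullback p1 p2 (h \o f) (h \o g).
Proof.
  intros [Hc Hu] Hh. split.
  - rewrite <- !comp_assoc, Hc. reflexivity.
  - intros Q q1 q2 E. apply Hu. apply Hh. rewrite !comp_assoc. exact E.
Qed.

Lemma is_pullback_paste {P X B B' Y B'' : C} {p1 : Hom P X} {p2 : Hom P B}
    {u : Hom X B'} {b : Hom B B'} {v : Hom X Y} {g : Hom B' B''} {w : Hom Y B''} :
  is_pullback p1 p2 u b -> is_pullback u v g w ->
  is_pullback p2 (v \o p1) (g \o b) w.
Proof.
  intros [Hc1 Hu1] [Hc2 Hu2]. split.
  - rewrite <- comp_assoc, <- Hc1, comp_assoc, Hc2, comp_assoc. reflexivity.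
  - intros Q q1 q2 E.
    assert (E' : g \o (b \o q1) = w \o q2) by (rewrite comp_assoc; exact E).
    destruct (Hu2 Q (b \o q1) q2 E') as [x [[Hx1 Hx2] Hxu]].
    destruct (Hu1 Q x q1 Hx1) as [z [[Hz1 Hz2] Hzu]].
    exists z. split.
    + split; [exact Hz2|]. rewrite <- comp_assoc, Hz1. exact Hx2.
    + intros z' [Hz1' Hz2']. apply Hzu. split; [|exact Hz1'].
      symmetry. apply Hxu. split.
      * rewrite comp_assoc, Hc1, <- comp_assoc, Hz1'. reflexivity.
      * rewrite comp_assoc. exact Hz2'.
Qed.

Lemma is_FPC_unique {A B D F X Y : C} {f : Hom A B} {m : Hom B D}
    {n : Hom A F} {h : Hom F D} {u : Hom X B} {v : Hom X Y} {w : Hom Y D}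
    {t : Hom X A} {y1 y2 : Hom Y F} :
  is_FPC f m n h -> is_pullback u v m w -> f \o t = u ->
  h \o y1 = w -> y1 \o v = n \o t ->
  h \o y2 = w -> y2 \o v = n \o t ->
  y1 = y2.
Proof.
  intros [_ [_ Huniv]] Hpb Ht H1 H1' H2 H2'.
  destruct (Huniv X Y u v w Hpb t Ht) as [y [_ Hyu]].
  transitivity y; [symmetry|]; apply Hyu; split; assumption.
Qed.

Lemma is_FPC_factor {A B B' B'' A' A'' : C} {f : Hom A B} {beta : Hom B B'}
    {alpha : Hom A A'} {f' : Hom A' B'} {g : Hom B' B''}
    {psia : Hom A A''} {f'' : Hom A'' B''} :
  is_FPC f beta alpha f' -> is_mono g -> is_FPC f (g \o beta) psia f'' ->
  exists! chi : Hom A' A'', f'' \o chi = g \o f' /\ chi \o alpha = psia.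
Proof.
  intros [_ [Hpb _]] Hg [_ [_ Huniv]].
  destruct (Huniv A A' f alpha (g \o f') (is_pullback_postcomp_mono Hpb Hg)
              (idm A) (comp_id_r f)) as [chi [[H1 H2] Hu]].
  rewrite comp_id_r in H2, Hu.
  exists chi. split; [split; assumption|].
  intros chi' [H1' H2']. apply Hu. split; assumption.
Qed.

End PullbacksAndFPCs.

Section FPCCancellation.
Context {C : Category} {A B B' B'' A' A'' : C}.
Context {f : Hom A B} {beta : Hom B B'} {alpha : Hom A A'} {f' : Hom A' B'}
  {g : Hom B' B''} {psia : Hom A A''} {f'' : Hom A'' B''} {chi : Hom A' A''}.
Hypothesis inner : is_FPC f beta alpha f'.
Hypothesis outer : is_FPC f (g \o beta) psia f''.
Hypothesis g_mono : is_mono g.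
Hypothesis pullbacks_along_beta : forall {X : C} (u : Hom X B'),
  exists (P : C) (p1 : Hom P X) (p2 : Hom P B), is_pullback p1 p2 u beta.
Hypothesis chi_f'' : f'' \o chi = g \o f'.
Hypothesis chi_alpha : chi \o alpha = psia.

Lemma lift_through_inner {X P : C} {p1 : Hom P X} {p2 : Hom P B} {u : Hom X B'}
    {s : Hom X A'} :
  is_pullback p1 p2 u beta -> f' \o s = u ->
  exists t : Hom P A, f \o t = p2 /\ alpha \o t = s \o p1.
Proof.
  intros [Hc _] Hs.
  destruct inner as [_ [[_ Hpb] _]].
  assert (E : beta \o p2 = f' \o (s \o p1))
    by (rewrite comp_assoc, Hs; exact (eq_sym Hc)).
  destruct (Hpb P p2 (s \o p1) E) as [t [Ht _]].
  exists t. exact Ht.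
Qed.

Lemma outer_maps_eq {X P : C} {p1 : Hom P X} {p2 : Hom P B} {u : Hom X B'}
    {t : Hom P A} {z1 z2 : Hom X A''} :
  is_pullback p1 p2 u beta -> f \o t = p2 ->
  f'' \o z1 = g \o u -> z1 \o p1 = psia \o t ->
  f'' \o z2 = g \o u -> z2 \o p1 = psia \o t ->
  z1 = z2.
Proof.
  intros Hpb Ht.
  apply (is_FPC_unique outer
           (is_pullback_postcomp_mono (is_pullback_sym Hpb) g_mono) Ht).
Qed.

Lemma cancelled_square_is_pullback : is_pullback f' chi g f''.
Proof.
  split; [exact (eq_sym chi_f'')|].
  intros Q q1 q2 E.
  destruct (pullbacks_along_beta q1) as [P [p1 [p2 Hpq]]].
  pose proof Hpq as [Hq _].
  destruct outer as [_ [[_ Houter_pb] _]].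
  assert (E2 : (g \o beta) \o p2 = f'' \o (q2 \o p1)).
  { rewrite <- comp_assoc, <- Hq, comp_assoc, E, comp_assoc. reflexivity. }
  destruct (Houter_pb P p2 (q2 \o p1) E2) as [t [[Ht1 Ht2] Htu]].
  destruct inner as [_ [_ Hinner_univ]].
  destruct (Hinner_univ P Q p2 p1 q1 (is_pullback_sym Hpq) t Ht1)
    as [y [[Hy1 Hy2] Hyu]].
  exists y. split.
  - split; [exact Hy1|].
    apply (outer_maps_eq Hpq Ht1).
    + rewrite comp_assoc, chi_f'', <- comp_assoc, Hy1. reflexivity.
    + rewrite <- comp_assoc, Hy2, comp_assoc, chi_alpha. reflexivity.
    + exact (eq_sym E).
    + exact (eq_sym Ht2).
  - intros y' [Hy1' Hy2'].
    destruct (lift_through_inner Hpq Hy1') as [t' [Ht1' Ht2']].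
    assert (Htt : t = t').
    { apply Htu. split; [exact Ht1'|].
      rewrite <- chi_alpha, <- comp_assoc, Ht2', comp_assoc, Hy2'. reflexivity. }
    subst t'.
    apply Hyu. split; [exact Hy1'|exact (eq_sym Ht2')].
Qed.

Lemma cancelled_square_universal :
  forall (X Y : C) (u : Hom X B') (v : Hom X Y) (w : Hom Y B''),
    is_pullback u v g w ->
    forall t : Hom X A', f' \o t = u ->
      exists! y : Hom Y A'', f'' \o y = w /\ y \o v = chi \o t.
Proof.
  intros X Y u v w Huv t Ht.
  destruct (pullbacks_along_beta u) as [P [p1 [p2 Hpq]]].
  destruct (lift_through_inner Hpq Ht) as [t' [Ht1' Ht2']].
  assert (Hchi_t : (chi \o t) \o p1 = psia \o t')
    by (rewrite <- comp_assoc, <- Ht2', comp_assoc, chi_alpha; reflexivity).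
  destruct outer as [_ [_ Houter_univ]].
  destruct (Houter_univ P Y p2 (v \o p1) w (is_pullback_paste Hpq Huv) t' Ht1')
    as [y [[Hy1 Hy2] Hyu]].
  exists y. split.
  - split; [exact Hy1|].
    apply (outer_maps_eq Hpq Ht1').
    + rewrite comp_assoc, Hy1. exact (eq_sym (proj1 Huv)).
    + rewrite <- comp_assoc. exact Hy2.
    + rewrite comp_assoc, chi_f'', <- comp_assoc, Ht. reflexivity.
    + exact Hchi_t.
  - intros y' [Hy1' Hy2']. apply Hyu. split; [exact Hy1'|].
    rewrite comp_assoc, Hy2'. exact Hchi_t.
Qed.

Lemma is_FPC_cancel : is_FPC f' g chi f''.
Proof.
  split; [exact chi_f''|].
  split; [exact cancelled_square_is_pullback|exact cancelled_square_universal].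
Qed.

End FPCCancellation.

Section TargetOpfibration.
Context {C : Category} {M : morph_class C}.
Hypothesis M_stable : stable_system_of_monics M.
Hypothesis M_pullbacks : has_pullbacks_along M.

Lemma FPCv_hom_of_FPC {A B A' B' : C} {f : Hom A B} {beta : Hom B B'}
    {alpha : Hom A A'} {f' : Hom A' B'} :
  M B B' beta -> is_FPC f beta alpha f' -> FPCv_hom M f f' alpha beta.
Proof.
  intros Hb HF. pose proof HF as [Hc [Hpb _]].
  destruct M_stable as [_ [_ [_ Mstab]]].
  split; [exact (Mstab _ _ _ _ alpha f f' beta Hb (is_pullback_sym Hpb))|].
  split; [exact Hb|]. split; [exact (eq_sym Hc)|exact HF].
Qed.

Lemma FPC_T_opcartesian {A B A' B' : C} {f : Hom A B} {beta : Hom B B'}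
    {alpha : Hom A A'} {f' : Hom A' B'} :
  M B B' beta -> is_FPC f beta alpha f' -> T_opcartesian M f f' alpha beta.
Proof.
  intros Hb inner A'' B'' f'' psia psib [_ [_ [_ outer]]] g Hg Hgb.
  subst psib.
  assert (g_mono : is_mono g) by exact (proj1 M_stable _ _ g Hg).
  destruct (is_FPC_factor inner g_mono outer) as [chi [[Hchi1 Hchi2] Hchiu]].
  exists (chi, g). simpl. split.
  - split; [|split; [split; [exact Hchi2|reflexivity]|reflexivity]].
    apply FPCv_hom_of_FPC; [exact Hg|].
    exact (is_FPC_cancel inner outer g_mono
             (fun X u => M_pullbacks X B' B u beta Hb) Hchi1 Hchi2).
  - intros [xa xb] [[_ [_ [Hx _]]] [[Hxa _] Hxb]]. simpl in *. subst xb.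
    f_equal. apply Hchiu. split; [exact (eq_sym Hx)|exact Hxa].
Qed.

End TargetOpfibration.

Theorem mainTheorem3 (C : Category) (M : morph_class C) :
  stable_system_of_monics M ->
  has_pullbacks_along M ->
  has_FPCs_along M ->
  target_is_opfibration M.
Proof.
  intros M_stable M_pullbacks M_FPCs A B B' f beta Hb.
  destruct (M_FPCs A B B' f beta Hb) as [A' [alpha [f' HF]]].
  exists A', f', alpha. split.
  - exact (FPCv_hom_of_FPC M_stable Hb HF).
  - exact (FPC_T_opcartesian M_stable M_pullbacks Hb HF).
Qed.
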